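(* Let $T$ be a tree on $n$ vertices. Then $k(T)\ge \left\lceil \frac{\mathrm{diam}(T)+1}{2}\right\rceil$, and this bound is tight (equality holds, for example, for stars and for paths).
   Context: For a connected graph $G=(V,E)$ and $v\in V$, the status of $v$ is $s(v)=\sum_{u\in V} d(v,u)$, where $d$ is the shortest-path distance. $k(G)$ denotes the number of distinct values among the statuses of the vertices of $G$. $\mathrm{diam}(T)$ is the diameter of $T$. *)

From mathcomp Require Import all_boot.
Set Implicit Arguments. Unset Strict Implicit. Unset Printing Implicit Defensive.

Section Graphs.
Variables (T : finType) (e : rel T).

Definition simple_graph : Prop := symmetric e /\ irreflexive e.

Definition connected_graph : Prop := forall x y : T, connect e x y.

Definition acyclic_graph : Prop :=
  forall c : seq T, uniq c -> 3 <= size c -> ~~ cycle e c.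

Definition is_tree : Prop :=
  [/\ simple_graph, 0 < #|T|, connected_graph & acyclic_graph].

Definition walk_len (x y : T) (n : nat) : bool :=
  [exists p : n.-tuple T, path e x p && (last x p == y)].

(* shortest-path distance: least n with a walk of length n from x to y
   (in a connected graph such n exists and is < #|T|). *)
Definition dist (x y : T) : nat := find (walk_len x y) (iota 0 #|T|).

Definition status (v : T) : nat := \sum_(u : T) dist v u.

(* k(G): number of distinct status values *)
Definition num_status : nat := size (undup [seq status v | v <- enum T]).

Definition diam : nat := \max_(u : T) \max_(v : T) dist u v.

End Graphs.

Definition path_graph (n : nat) : rel 'I_n :=
  fun i j => (i.+1 == j :> nat) || (j.+1 == i :> nat).

Definition star_graph (n : nat) : rel 'I_n :=
  fun i j => (i != j) && ((i == 0 :> nat) || (j == 0 :> nat)).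
Arguments path_graph n : clear implicits.
Arguments star_graph n : clear implicits.

From mathcomp Require Import all_boot perm zify.
Set Implicit Arguments. Unset Strict Implicit. Unset Printing Implicit Defensive.

(* Along a path x_0 ... x_d realising the diameter, the statuses are strictly
   convex.  Indeed, if x has two distinct neighbours a and b, then for every
   vertex u at most one of a, b is not farther from u than x (otherwise the two
   shortest walks to u would close a cycle through x), so
   2 d(x,u) <= d(a,u) + d(b,u), strictly for u = x.  A strictly convex sequence
   first decreases strictly and then increases strictly, so its d + 1 terms take
   at least ceil((d + 1) / 2) distinct values.  Equality for paths and stars
   comes from their automorphisms (the reflection of the path, the
   transpositions of leaves of the star), which preserve statuses. *)

Section Distance.
Variables (T : finType) (e : rel T).

Lemma walk_lenP x y n :
  reflect (exists p, [/\ size p = n, path e x p & last x p = y])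
          (walk_len e x y n).
Proof.
apply: (iffP existsP) => [[p /andP[p_path /eqP p_last]]|[p [p_size p_path p_last]]].
  by exists (val p); rewrite size_tuple.
have p_tsize : size p == n by apply/eqP.
by exists (Tuple p_tsize); rewrite /= p_path p_last eqxx.
Qed.

Lemma dist_le_size x p : path e x p -> dist e x (last x p) <= size p.
Proof.
move=> x_p; rewrite /dist; have [small_p|] := ltnP (size p) #|T|; last first.
  by move=> big_p; rewrite (leq_trans _ big_p) // -[X in _ <= X](size_iota 0) find_size.
rewrite leqNgt; apply/negP => /(before_find 0).
by rewrite nth_iota // add0n => /walk_lenP; apply; exists p.
Qed.

Lemma dist_refl x : dist e x x = 0.
Proof. by apply/eqP; rewrite -leqn0 (dist_le_size (p := [::])). Qed.

Lemma dist_lt_visit a x p : path e a p -> x \in p -> dist e x (last a p) < size p.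
Proof.
move=> a_p /splitPr p_split; case: p_split a_p => p1 p2.
rewrite cat_path last_cat size_cat => /and3P[_ _ x_p2].
by rewrite /= addnS ltnS; apply: leq_trans (dist_le_size x_p2) (leq_addl _ _).
Qed.

Lemma leq_dist_diam x y : dist e x y <= diam e.
Proof. exact: leq_trans (leq_bigmax y) (leq_bigmax x). Qed.

Lemma num_status_le s : (forall v, status e v \in s) -> num_status e <= size s.
Proof.
move=> status_s; apply: uniq_leq_size (undup_uniq _) _ => z.
by rewrite mem_undup => /mapP[v _ ->].
Qed.

Hypothesis e_conn : connected_graph e.

Lemma shortest_walk x y :
  exists p, [/\ size p = dist e x y, path e x p & last x p = y].
Proof.
have /connectP[p0 x_p0 ->] := e_conn x y.
case: (shortenP x_p0) => p x_p p_uniq _.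
have p_small : size p < #|T|.
  by rewrite -[_.+1]/(size (x :: p)) -(card_uniqP p_uniq) max_card.
have has_p : has (walk_len e x (last x p)) (iota 0 #|T|).
  by apply/hasP; exists (size p); rewrite ?mem_iota //; apply/walk_lenP; exists p.
have := nth_find 0 has_p; rewrite has_find size_iota in has_p.
by rewrite nth_iota // add0n => /walk_lenP.
Qed.

Lemma dist_eq0 x y : dist e x y = 0 -> x = y.
Proof.
have [p [<- _ <-]] := shortest_walk x y.
by move/size0nil->.
Qed.

Lemma dist_le1 x y : dist e x y <= 1 -> (x == y) || e x y.
Proof.
have [[|z [|? ?]] [<- /= x_p <-]] := shortest_walk x y => // _.
  by rewrite eqxx.
by rewrite andbT in x_p; rewrite x_p orbT.
Qed.

Lemma dist_edge a x u : e a x -> dist e a u <= (dist e x u).+1.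
Proof.
have [p [<- x_p <-]] := shortest_walk x u.
by move=> ax; apply: (dist_le_size (p := x :: p)); rewrite /= ax.
Qed.

Lemma diametral_path :
  0 < #|T| -> exists x p, [/\ path e x p, uniq (x :: p) & diam e <= size p].
Proof.
case/card_gt0P=> x0 _.
have [x [y ->]] : exists x y, diam e = dist e x y.
  rewrite /diam (bigmax_eq_arg x0) //.
  by rewrite (bigmax_eq_arg x0) //; do 2!eexists.
have [p [_ x_p <-]] := shortest_walk x y.
case: (shortenP x_p) => q x_q q_uniq _.
by exists x, q; split=> //; apply: dist_le_size.
Qed.

End Distance.

Section Automorphism.
Variables (T : finType) (e : rel T) (s : T -> T).
Hypotheses (s_inj : injective s) (s_edge : forall x y, e (s x) (s y) = e x y).

Lemma walk_len_autom x y n : walk_len e (s x) (s y) n = walk_len e x y n.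
Proof.
have walk_map g : (forall a b, e a b -> e (g a) (g b)) ->
    forall a b, walk_len e a b n -> walk_len e (g a) (g b) n.
  move=> g_edge a b /walk_lenP[p [<- a_p <-]]; apply/walk_lenP.
  exists (map g p); rewrite size_map last_map path_map; split=> //.
  exact: sub_path a_p.
have [s' sK s'K] := injF_bij s_inj.
apply/idP/idP; last by apply: walk_map => a b; rewrite s_edge.
rewrite -{2}(sK x) -{2}(sK y); apply: walk_map => a b.
by rewrite -{1}(s'K a) -{1}(s'K b) s_edge.
Qed.

Lemma status_autom x : status e (s x) = status e x.
Proof.
rewrite /status (reindex_inj s_inj); apply: eq_bigr => u _.
by apply: eq_find => n; apply: walk_len_autom.
Qed.

End Automorphism.

Section Tree.
Variables (T : finType) (e : rel T).
Hypothesis e_tree : is_tree e.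

Let e_sym : symmetric e. Proof. by case: e_tree => -[]. Qed.
Let e_irr : irreflexive e. Proof. by case: e_tree => -[]. Qed.
Let e_conn : connected_graph e. Proof. by case: e_tree. Qed.

Lemma tree_walk_visits x a b p :
  e x a -> e x b -> a != b -> path e a p -> last a p = b -> x \in a :: p.
Proof.
move=> xa xb neq_ab a_p p_last; apply/negPn/negP => x_notin_p.
case: (shortenP a_p) p_last => q a_q q_uniq q_sub last_q.
have [_ _ _ e_acyc] := e_tree.
apply: negP (e_acyc (x :: a :: q) _ _) _.
- rewrite cons_uniq q_uniq andbT; apply: contra x_notin_p.
  by rewrite !inE => /orP[-> // | /q_sub ->]; rewrite orbT.
- by case: q {a_q q_uniq q_sub} last_q => [/= ab|]; first by rewrite ab eqxx in neq_ab.
- by rewrite /= rcons_path xa a_q last_q e_sym xb.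
Qed.

Lemma tree_neighbor_farther x a b u :
  e x a -> e x b -> a != b -> dist e a u <= dist e x u -> dist e x u < dist e b u.
Proof.
move=> xa xb neq_ab au; rewrite ltnNge; apply/negP => bu.
have [pa [pa_size a_pa pa_last]] := shortest_walk e_conn a u.
have [pb [pb_size b_pb pb_last]] := shortest_walk e_conn b u.
have x_notin_pa : x \notin pa.
  by apply: contraL au => /(dist_lt_visit a_pa); rewrite pa_last pa_size -ltnNge.
have x_notin_pb : x \notin pb.
  by apply: contraL bu => /(dist_lt_visit b_pb); rewrite pb_last pb_size -ltnNge.
pose q := rev (belast b pb).
have u_q : path e u q.
  by rewrite -pb_last rev_path; apply: sub_path b_pb => y z; rewrite /= e_sym.
have q_last : last u q = b.
  by rewrite -pb_last -(last_cons b) -rev_rcons -lastI rev_cons last_rcons.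
have := tree_walk_visits xa xb neq_ab (p := pa ++ q).
rewrite cat_path a_pa pa_last u_q last_cat pa_last q_last => /(_ isT erefl).
rewrite inE mem_cat mem_rev (negPf x_notin_pa) /=.
case/orP => [/eqP xa_eq | /mem_belast]; first by rewrite xa_eq e_irr in xa.
by rewrite inE (negPf x_notin_pb) orbF => /eqP xb_eq; rewrite xb_eq e_irr in xb.
Qed.

Lemma dist_neighbors_convex x a b u :
  e x a -> e x b -> a != b -> 2 * dist e x u <= dist e a u + dist e b u.
Proof.
move=> xa xb neq_ab.
have := dist_edge e_conn u xa; have := dist_edge e_conn u xb.
have [au|ua] := leqP (dist e a u) (dist e x u).
  by have := tree_neighbor_farther xa xb neq_ab au; lia.
by lia.
Qed.

Lemma status_convex x a b :
  e x a -> e x b -> a != b -> 2 * status e x < status e a + status e b.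
Proof.
move=> xa xb neq_ab.
rewrite /status -big_split big_distrr /= (bigD1 x) //= [X in _ < X](bigD1 x) //=.
rewrite dist_refl muln0 add0n.
have ax_pos : 0 < dist e a x.
  by rewrite lt0n; apply/eqP => /(dist_eq0 e_conn) ax; rewrite ax e_irr in xa.
suff : \sum_(u | u != x) 2 * dist e x u
         <= \sum_(u | u != x) (dist e a u + dist e b u) by lia.
by apply: leq_sum => u _; apply: dist_neighbors_convex.
Qed.

End Tree.

Lemma iota_step_inj (U : Type) (f : nat -> U) (r : rel U) a n :
  irreflexive r -> transitive r ->
  (forall i, a <= i -> i.+1 < a + n -> r (f i) (f i.+1)) ->
  {in iota a n &, injective f}.
Proof.
move=> r_irr r_trans f_step.
have f_homo : {in iota a n &, {homo f : i j / i < j >-> r i j}}.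
  apply: homo_ltn_in => [y x z | i j | i]; first exact: r_trans.
    by rewrite !mem_iota => ? ? k; rewrite mem_iota; lia.
  by rewrite !mem_iota => ? ?; apply: f_step; lia.
move=> i j iD jD fij.
case: (ltngtP i j) => // [/(f_homo _ _ iD jD) | /(f_homo _ _ jD iD)];
  by rewrite fij r_irr.
Qed.

Lemma leq_size_undup_inj_in (U : eqType) (f : nat -> U) a n s :
  {in iota a n &, injective f} -> {in iota a n, forall i, f i \in s} ->
  n <= size (undup s).
Proof.
move=> f_inj f_s; rewrite -[n](size_iota a) -(size_map f).
apply: uniq_leq_size; first by rewrite map_inj_in_uniq ?iota_uniq.
by move=> _ /mapP[i ia ->]; rewrite mem_undup f_s.
Qed.

Section StrictlyConvexSequence.
Variables (f : nat -> nat) (L : nat).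
Hypothesis f_convex : forall i, i.+2 <= L -> 2 * f i.+1 < f i + f i.+2.

Lemma strictly_convex_incr i j : f i <= f i.+1 -> i < j < L -> f j < f j.+1.
Proof.
move=> fi; elim: j => [//|j IHj] /andP[lt_ij lt_jL].
have fj : f j <= f j.+1.
  move: lt_ij; rewrite ltnS leq_eqVlt => /orP[/eqP <- // | lt_ij].
  by apply: ltnW; apply: IHj; rewrite lt_ij ltnW.
by have := @f_convex j; lia.
Qed.

Lemma strictly_convex_distinct_values :
  uphalf L.+1 <= size (undup [seq f i | i <- iota 0 L.+1]).
Proof.
(* [m] is where [f] stops decreasing; [f] is injective on [0, m] and on (m, L]. *)
pose m := find (fun i => f i <= f i.+1) (iota 0 L).
have le_mL : m <= L by rewrite -[X in _ <= X](size_iota 0) find_size.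
have decr i : i < m -> f i.+1 < f i.
  by move=> lt_im; have := before_find 0 lt_im; rewrite nth_iota ?add0n; lia.
have incr i : m < i < L -> f i < f i.+1.
  move=> /andP[lt_mi lt_iL]; apply: (strictly_convex_incr (i := m)); last lia.
  have has_m : has (fun i => f i <= f i.+1) (iota 0 L) by rewrite has_find size_iota; lia.
  by have := nth_find 0 has_m; rewrite -/m nth_iota ?add0n //; lia.
have decr_inj : {in iota 0 m.+1 &, injective f}.
  apply: (iota_step_inj (r := gtn)) => [x | y x z xy yz | i _ lt_im].
  - exact: ltnn.
  - exact: ltn_trans yz xy.
  - exact: decr.
have incr_inj : {in iota m.+1 (L - m) &, injective f}.
  by apply: (iota_step_inj ltnn ltn_trans) => i le_mi lt_iL; apply: incr; lia.
set values := [seq f i | i <- iota 0 L.+1].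
have values_in a n : a + n <= L.+1 -> {in iota a n, forall i, f i \in values}.
  by move=> le_anL i; rewrite mem_iota => range_i; rewrite map_f // mem_iota; lia.
have := leq_size_undup_inj_in decr_inj (values_in _ _ _).
have := leq_size_undup_inj_in incr_inj (values_in _ _ _).
rewrite uphalfE; lia.
Qed.

End StrictlyConvexSequence.

Lemma tree_num_status_ge (T : finType) (e : rel T) :
  is_tree e -> uphalf (diam e).+1 <= num_status e.
Proof.
move=> e_tree; have [[e_sym _] T_gt0 e_conn _] := e_tree.
have [x [p [x_p xp_uniq diam_p]]] := diametral_path e_conn T_gt0.
pose f i := status e (nth x (x :: p) i).
have f_convex i : i.+2 <= size p -> 2 * f i.+1 < f i + f i.+2.
  move=> lt_ip; have /pathP step := x_p; apply: status_convex => //.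
  - by rewrite e_sym; apply: step; lia.
  - by apply: step; lia.
  - by rewrite nth_uniq //=; lia.
apply: leq_trans (uphalf_leq _) (leq_trans (strictly_convex_distinct_values f_convex) _).
  by rewrite ltnS.
apply: uniq_leq_size (undup_uniq _) _ => z.
by rewrite !mem_undup => /mapP[i _ ->]; apply: map_f; rewrite mem_enum.
Qed.

(* The largest vertex of a cycle has two distinct neighbours below it. *)
Lemma ord_acyclic n (e : rel 'I_n) :
  (forall m a b : 'I_n, e m a -> e b m -> a <= m -> b <= m -> a = b) ->
  acyclic_graph e.
Proof.
move=> lower_nbrs [//|c0 c] c_uniq c_size; apply/negP => c_cycle.
have [m m_in m_max] := arg_maxnP (fun i : 'I_n => val i) (mem_head c0 c).
have := rot_index m_in; set r := (drop _ _ ++ take _ _) => c_rot; clearbody r.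
have r_uniq : uniq (m :: r) by rewrite -c_rot rot_uniq.
have r_cycle : cycle e (m :: r) by rewrite -c_rot rot_cycle.
have r_max z : z \in r -> z <= m.
  move=> z_r; apply: m_max; change (z \in c0 :: c).
  by rewrite -(mem_rot (index m (c0 :: c))) c_rot inE z_r orbT.
have r_size : 2 <= size r.
  by move: c_size; rewrite -(size_rot (index m (c0 :: c))) c_rot.
case: r r_uniq r_cycle r_max r_size {c_rot} => [|a [|b r]] //= r_uniq.
move=> /and3P[ma _ /[!rcons_path] /andP[_ last_m]] r_max _.
have a_last : a != last b r.
  by apply: contraTneq r_uniq => ->; rewrite mem_last andbF.
move/eqP: a_last; apply; apply: lower_nbrs ma last_m _ _.
  by rewrite r_max ?mem_head.
by rewrite r_max // inE mem_last orbT.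
Qed.

Lemma path_graph_tree n : 0 < n -> is_tree (path_graph n).
Proof.
case: n => [//|n] _.
have e_sym : symmetric (path_graph n.+1) by move=> x y; rewrite /path_graph orbC.
split; rewrite ?card_ord //.
- by split=> // x; rewrite /path_graph; apply/negP => /orP[] /eqP; lia.
- have from0 k : k < n.+1 -> connect (path_graph n.+1) ord0 (inord k).
    elim: k => [|k IHk] lt_kn.
      by rewrite (_ : inord 0 = ord0) ?connect0 //; apply: val_inj; rewrite /= inordK.
    apply: connect_trans (IHk (ltnW lt_kn)) (connect1 _).
    by rewrite /path_graph !inordK ?eqxx //; lia.
  move=> x y; apply: (@connect_trans _ _ ord0).
    by rewrite (sym_connect_sym e_sym) -(inord_val x) from0.
  by rewrite -(inord_val y) from0.
- apply: ord_acyclic => m a b; rewrite /path_graph.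
  by move=> /orP[] /eqP ma /orP[] /eqP bm am bm'; apply: ord_inj; lia.
Qed.

Lemma path_graph_last_le n (i : 'I_n) p :
  path (path_graph n) i p -> last i p <= i + size p.
Proof.
elim: p i => [|j p IHp] i /=; first by rewrite addn0.
by case/andP=> /orP[] /eqP ij /IHp; lia.
Qed.

Lemma path_graph_num_status n : 0 < n ->
  num_status (path_graph n) = uphalf (diam (path_graph n)).+1.
Proof.
move=> n_gt0; have e_tree := path_graph_tree n_gt0.
apply/eqP; rewrite eqn_leq tree_num_status_ge // andbT.
case: n n_gt0 e_tree => [//|n] _ [_ _ e_conn _].
have diam_ge : n <= diam (path_graph n.+1).
  apply: leq_trans (leq_dist_diam _ ord0 ord_max).
  have [p [<- p_path p_last]] := shortest_walk e_conn ord0 ord_max.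
  by have := path_graph_last_le p_path; rewrite p_last.
have rev_edge x y : path_graph n.+1 (rev_ord x) (rev_ord y) = path_graph n.+1 x y.
  rewrite /path_graph /=; have := ltn_ord x; have := ltn_ord y.
  by move=> ? ?; apply/orP/orP; case=> /eqP ?; [right|left|right|left]; apply/eqP; lia.
apply: (@leq_trans (uphalf n.+1)); last by apply: uphalf_leq; rewrite ltnS.
pose left_half := [seq status (path_graph n.+1) (inord i) | i <- iota 0 (uphalf n.+1)].
apply: leq_trans (num_status_le (s := left_half) _) _.
  move=> v; have [lt_v|le_v] := ltnP v (uphalf n.+1).
    by apply/mapP; exists (val v); rewrite ?mem_iota ?inord_val.
  apply/mapP; exists (n - v); first by rewrite mem_iota uphalfE in le_v *; lia.
  rewrite -(status_autom (@rev_ord_inj _) rev_edge); congr status; apply: val_inj.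
  by rewrite /= inordK //; lia.
by rewrite size_map size_iota.
Qed.

Lemma star_graph_tree n : 0 < n -> is_tree (star_graph n).
Proof.
case: n => [//|n] _.
have e_sym : symmetric (star_graph n.+1).
  by move=> x y; rewrite /star_graph eq_sym orbC.
have to0 x : connect (star_graph n.+1) x ord0.
  have [->|x_neq0] := eqVneq x ord0; first exact: connect0.
  by apply: connect1; rewrite /star_graph x_neq0 orbT.
split; rewrite ?card_ord //.
- by split=> // x; rewrite /star_graph eqxx.
- move=> x y; apply: connect_trans (to0 x) _.
  by rewrite (sym_connect_sym e_sym).
- apply: ord_acyclic => m a b /andP[_ /orP[] /eqP ma] /andP[_ /orP[] /eqP bm] am bm'.
  all: by apply: ord_inj; lia.
Qed.

Lemma star_leaf_status n (v w : 'I_n) :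
  val v != 0 -> val w != 0 -> status (star_graph n) v = status (star_graph n) w.
Proof.
move=> v_leaf w_leaf; pose s := tperm v w.
have s_fix0 u : val u = 0 -> s u = u.
  by move=> u0; rewrite tpermD //; apply/eqP => /(congr1 val); rewrite u0; apply/eqP.
have s_center u : (val (s u) == 0) = (val u == 0).
  apply/eqP/eqP => [su0|/s_fix0 -> //].
  by rewrite -(tpermK v w u) -/s (s_fix0 _ su0).
have s_edge x y : star_graph n (s x) (s y) = star_graph n x y.
  by rewrite /star_graph (inj_eq perm_inj) !s_center.
by rewrite -(status_autom perm_inj s_edge) tpermL.
Qed.

Lemma star_graph_num_status n : 0 < n ->
  num_status (star_graph n) = uphalf (diam (star_graph n)).+1.
Proof.
move=> n_gt0; have e_tree := star_graph_tree n_gt0.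
apply/eqP; rewrite eqn_leq tree_num_status_ge // andbT.
case: n n_gt0 e_tree => [|[|[|n]]] // _ [_ _ e_conn _].
- apply: leq_trans (num_status_le (s := [:: status (star_graph 1) ord0]) _) _.
    by move=> v; rewrite (ord1 v) mem_head.
  by [].
- have rev_edge x y : star_graph 2 (rev_ord x) (rev_ord y) = star_graph 2 x y.
    by case: x y => [[|[|?]] ?] // [[|[|?]] ?].
  apply: leq_trans (num_status_le (s := [:: status (star_graph 2) ord0]) _) _.
    move=> v; rewrite mem_seq1; apply/eqP.
    case: v => [[|[|//]] lt_v]; first by congr status; apply: ord_inj.
    by rewrite -(status_autom (@rev_ord_inj _) rev_edge); congr status; apply: ord_inj.
  by [].
have leaf_diam : 2 <= diam (star_graph n.+3).
  apply: leq_trans (leq_dist_diam _ (inord 1) ord_max); rewrite ltnNge.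
  apply: contraTN isT => /(dist_le1 e_conn).
  by rewrite /star_graph -val_eqE /= !inordK.
pose centre_leaf := [:: status (star_graph n.+3) ord0; status (star_graph n.+3) ord_max].
apply: leq_trans (num_status_le (s := centre_leaf) _) _.
  move=> v; have [->|v_leaf] := eqVneq v ord0; first exact: mem_head.
  rewrite -val_eqE /= in v_leaf.
  by rewrite (star_leaf_status (w := ord_max) v_leaf) // /centre_leaf !inE eqxx orbT.
by rewrite /= ltnS; apply: (half_leq leaf_diam).
Qed.

Theorem lemma3p2 :
  (forall (T : finType) (e : rel T), is_tree e ->
     uphalf (diam e).+1 <= num_status e)
  /\ (forall n : nat, 0 < n -> is_tree (path_graph n) /\
        num_status (path_graph n) = uphalf (diam (path_graph n)).+1)
  /\ (forall n : nat, 0 < n -> is_tree (star_graph n) /\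
        num_status (star_graph n) = uphalf (diam (star_graph n)).+1).
Proof.
split; first exact: tree_num_status_ge.
split=> n n_gt0.
  by split; [apply: path_graph_tree | apply: path_graph_num_status].
by split; [apply: star_graph_tree | apply: star_graph_num_status].
Qed.
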